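(* Let $(R,\mathfrak m)$ be a noetherian local ring and $\nu$ a valuation centered on $R$. Then there exists a local blowing up $R\to R^{(1)}$ with respect to $\nu$ such that $\mathrm{Nil}(R^{(1)})$ is the only associated prime ideal of $R^{(1)}$.
   Context: All rings are commutative noetherian with $1$; $\mathrm{Nil}(A)$ denotes the nilradical of $A$. A valuation on a ring $R$ is a map $\nu:R\to\Gamma\cup\{\infty\}$ ($\Gamma$ an ordered abelian group) with $\nu(ab)=\nu(a)+\nu(b)$, $\nu(a+b)\ge\min\{\nu(a),\nu(b)\}$, $\nu(1)=0$, $\nu(0)=\infty$, whose support $\mathrm{supp}(\nu)=\{a:\nu(a)=\infty\}$ is a minimal prime ideal; it extends to localizations at multiplicative sets disjoint from the support via $\nu(a/s)=\nu(a)-\nu(s)$ and restricts to subrings, implicitly. $\nu$ has a center on $R$ if $\nu\ge0$ on $R$; its center is $\mathfrak C_\nu(R)=\{a:\nu(a)>0\}$. $\nu$ is centered on $(R,\mathfrak m)$ if $\nu\ge0$ on $R$ and $\nu>0$ on $\mathfrak m$. Local blowing up: for $b\in R\setminus\mathrm{supp}(\nu)$ let $J(b)=\bigcup_{i\ge1}\mathrm{ann}_R(b^i)$, so $R/J(b)\subseteq R_b$. Given $a_1,\ldots,a_r\in R$ with $\nu(a_i)\ge\nu(b)$, let $R'=(R/J(b))[a_1/b,\ldots,a_r/b]\subseteq R_b$ and $R^{(1)}=R'_{\mathfrak C_\nu(R')}$; the canonical map $R\to R^{(1)}$ is the local blowing up of $R$ with respect to $\nu$ along $(b,a_1,\ldots,a_r)$.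 *)

(* Rings that arise as localizations are presented as
   "setoid rings": a carrier of representatives, a predicate selecting the
   admissible representatives, and an equality relation on representatives. *)
From HB Require Import structures.
From mathcomp Require Import all_boot all_order all_algebra.
Set Implicit Arguments. Unset Strict Implicit. Unset Printing Implicit Defensive.
Import Order.TTheory GRing.Theory Num.Theory.
Local Open Scope ring_scope.

Record sring := SRing {
  scar : Type;
  sval : scar -> Prop;                  (* admissible representatives *)
  seqv : scar -> scar -> Prop;          (* equality of the ring elements *)
  szero : scar; sone : scar;
  sadd : scar -> scar -> scar;
  sopp : scar -> scar;
  smul : scar -> scar -> scar }.

Section SringDefs.
Variable S : sring.

Definition is_ideal (I : scar S -> Prop) : Prop :=
  (forall x, I x -> sval x) /\
  (forall x y, sval y -> seqv x y -> I x -> I y) /\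
  I (szero S) /\
  (forall x y, I x -> I y -> I (sadd x y)) /\
  (forall x, I x -> I (sopp x)) /\
  (forall a x, sval a -> I x -> I (smul a x)).

Definition is_proper (I : scar S -> Prop) : Prop := ~ I (sone S).

Definition is_prime (P : scar S -> Prop) : Prop :=
  is_ideal P /\ is_proper P /\
  (forall x y, sval x -> sval y -> P (smul x y) -> P x \/ P y).

Definition is_maximal (M : scar S -> Prop) : Prop :=
  is_ideal M /\ is_proper M /\
  (forall J, is_ideal J -> is_proper J -> (forall x, M x -> J x) ->
     forall x, J x -> M x).

Definition is_minimal_prime (P : scar S -> Prop) : Prop :=
  is_prime P /\
  (forall Q, is_prime Q -> (forall x, Q x -> P x) -> forall x, P x -> Q x).

Fixpoint spow (x : scar S) (n : nat) : scar S :=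
  match n with O => sone S | n'.+1 => smul x (spow x n') end.

Definition nilradical (x : scar S) : Prop :=
  sval x /\ exists n, seqv (spow x n) (szero S).

Definition is_associated_prime (P : scar S -> Prop) : Prop :=
  is_prime P /\
  exists z, sval z /\
    forall x, P x <-> (sval x /\ seqv (smul x z) (szero S)).
End SringDefs.

Definition sring_of (R : comNzRingType) : sring :=
  @SRing R (fun _ => True) (@eq R) 0 1 +%R (fun x => - x) *%R.

Definition noetherian (R : comNzRingType) : Prop :=
  forall I : R -> Prop, is_ideal (S := sring_of R) I ->
    exists s : seq R, forall x,
      I x <-> exists cs : seq R, x = \sum_(i < size s) cs`_i * s`_i.

Definition local_ring (R : comNzRingType) (m : R -> Prop) : Prop :=
  is_maximal (S := sring_of R) m /\
  forall M, is_maximal (S := sring_of R) M -> forall x, M x <-> m x.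

Definition ordered_abelian_group (G : porderZmodType) : Prop :=
  (forall x y : G, (x <= y) || (y <= x)) /\
  (forall x y z : G, x <= y -> x + z <= y + z).

Section Valuation.
Variable G : porderZmodType.
(* G ∪ {∞}, with None = ∞ *)
Definition oadd (x y : option G) : option G :=
  match x, y with Some a, Some c => Some (a + c) | _, _ => None end.
Definition ole (x y : option G) : bool :=
  match x, y with
  | _, None => true
  | None, Some _ => false
  | Some a, Some c => a <= c end.
Definition omin (x y : option G) : option G := if ole x y then x else y.
Definition opos (x : option G) : bool :=
  match x with None => true | Some a => 0 < a end.

Definition is_valuation (R : comNzRingType) (nu : R -> option G) : Prop :=
  (forall a c, nu (a * c) = oadd (nu a) (nu c)) /\
  (forall a c, ole (omin (nu a) (nu c)) (nu (a + c))) /\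
  nu 1 = Some 0 /\ nu 0 = None /\
  is_minimal_prime (S := sring_of R) (fun a => nu a = None).

Definition centered_on (R : comNzRingType) (nu : R -> option G)
    (m : R -> Prop) : Prop :=
  (forall a, ole (Some 0) (nu a)) /\ (forall a, m a -> opos (nu a)).
End Valuation.

Section Blowup.
Variables (R : comNzRingType) (G : porderZmodType) (nu : R -> option G).
Variables (b : R) (as_ : seq R).

(* R_b : (x, n) represents x / b^n *)
Definition Rb := (R * nat)%type.
Definition beqv (p q : Rb) : Prop :=
  exists k, b ^+ k * (p.1 * b ^+ q.2 - q.1 * b ^+ p.2) = 0.
Definition badd (p q : Rb) : Rb := (p.1 * b ^+ q.2 + q.1 * b ^+ p.2, (p.2 + q.2)%N).
Definition bmul (p q : Rb) : Rb := (p.1 * q.1, (p.2 + q.2)%N).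
Definition bopp (p : Rb) : Rb := (- p.1, p.2).
Definition bzero : Rb := (0, 0%N).
Definition bone : Rb := (1, 0%N).

(* generators of R' = (R/J(b))[a_1/b, ..., a_r/b] inside R_b *)
Inductive Rgen : Rb -> Prop :=
  | Rgen_R x : Rgen (x, 0%N)
  | Rgen_a a : a \in as_ -> Rgen (a, 1%N)
  | Rgen_add p q : Rgen p -> Rgen q -> Rgen (badd p q)
  | Rgen_opp p : Rgen p -> Rgen (bopp p)
  | Rgen_mul p q : Rgen p -> Rgen q -> Rgen (bmul p q).

Definition inR' (p : Rb) : Prop := exists q, Rgen q /\ beqv q p.

Definition nub (p : Rb) : option G :=
  match nu b, nu p.1 with
  | Some vb, Some vx => Some (vx - vb *+ p.2)
  | _, _ => None end.

(* elements of R' outside the center C_nu(R') *)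
Definition R'offC (p : Rb) : Prop := inR' p /\ ~~ opos (nub p).

(* R^(1) = R'_{C_nu(R')} : (f, g) represents f / g *)
Definition blowup : sring :=
  @SRing (Rb * Rb)%type
    (fun fg => inR' fg.1 /\ R'offC fg.2)
    (fun fg fg' => exists h, R'offC h /\
        beqv (bmul h (badd (bmul fg.1 fg'.2) (bopp (bmul fg'.1 fg.2)))) bzero)
    (bzero, bone) (bone, bone)
    (fun fg fg' => (badd (bmul fg.1 fg'.2) (bmul fg'.1 fg.2), bmul fg.2 fg'.2))
    (fun fg => (bopp fg.1, fg.2))
    (fun fg fg' => (bmul fg.1 fg'.1, bmul fg.2 fg'.2)).
End Blowup.

(* Let P be the support of nu, a minimal prime, and I the kernel of R -> R_P.
   As R is noetherian, I is finitely generated, so a single b outside P kills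
   I; then J(b) = I and the blowing up along b is a localization of R / I at
   elements outside P.  By minimality P is nilpotent modulo I, and induction
   over a finite generating set of P produces z with ann_{R/I}(z) = P.  In the
   blowing up the nilradical is therefore the prime ideal ann(z/1); any
   associated prime ann(w) contains the nilradical and, as elements outside P
   are regular modulo I, is contained in it. *)

From Pilot Require Import Defs.
From HB Require Import structures.
From mathcomp Require Import all_boot all_order all_algebra.
From mathcomp Require Import ring.
From Stdlib Require Import Classical ClassicalEpsilon.
From Stdlib Require Import FunctionalExtensionality PropExtensionality.
Set Implicit Arguments. Unset Strict Implicit. Unset Printing Implicit Defensive.
Import Order.TTheory GRing.Theory Num.Theory.
Local Open Scope ring_scope.

Section Ideals.
Variable R : comNzRingType.

Definition ideal (J : R -> Prop) := is_ideal (S := sring_of R) J.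
Definition incl (J K : R -> Prop) := forall x, J x -> K x.

Lemma idealP (J : R -> Prop) : ideal J <->
  [/\ J 0, (forall x y, J x -> J y -> J (x + y)), (forall x, J x -> J (- x))
    & (forall a x, J x -> J (a * x))].
Proof.
split; first by case=> _ [_ [J0 [JD [JN JM]]]]; split=> // a x; apply: JM.
case=> J0 JD JN JM; do 2!split=> //; first by move=> x y _ /= ->.
by do 3!split=> //; move=> a x _; apply: JM.
Qed.

Lemma noetherian_fg (J : R -> Prop) : noetherian R -> ideal J ->
  exists s : seq R, (forall x, x \in s -> J x) /\
    forall K, ideal K -> (forall x, x \in s -> K x) -> incl J K.
Proof.
move=> Rnoeth idJ; have [s Js] := Rnoeth J idJ; exists s; split.
  move=> _ /(nthP 0) [i lt_i_s <-]; apply/Js.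
  exists [seq (j == i)%:R | j <- iota 0 (size s)].
  rewrite (bigD1 (Ordinal lt_i_s)) //= big1 => [|j /negbTE neq_ji].
    by rewrite (nth_map 0%N) ?size_iota // nth_iota // eqxx mul1r addr0.
  rewrite (nth_map 0%N) ?size_iota // nth_iota // add0n.
  by rewrite (_ : (j == i :> nat) = false) ?mul0r // -neq_ji -val_eqE.
move=> K /idealP [K0 KD _ KM] sK y /Js [cs ->].
by apply: (big_ind K) => // i _; apply/KM/sK/mem_nth.
Qed.

Lemma noetherian_ascending_chain (f : nat -> R -> Prop) : noetherian R ->
  (forall n, ideal (f n)) -> (forall n, incl (f n) (f n.+1)) ->
  exists N, incl (f N.+1) (f N).
Proof.
move=> Rnoeth idf incl_f.
have mono m n : (m <= n)%N -> incl (f m) (f n).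
  elim: n => [|n IH]; first by rewrite leqn0 => /eqP ->.
  by rewrite leq_eqVlt ltnS => /predU1P [-> //|/IH lemn x /lemn /incl_f].
pose U x := exists n, f n x.
have idU : ideal U.
  apply/idealP; split.
  - by exists 0%N; case/idealP: (idf 0%N).
  - move=> x y [m fx] [n fy]; exists (maxn m n).
    case/idealP: (idf (maxn m n)) => _ fD _ _.
    by apply: fD; [apply: (mono m) fx|apply: (mono n) fy]; rewrite ?leq_maxl ?leq_maxr.
  - by move=> x [n fx]; exists n; case/idealP: (idf n) => _ _ fN _; apply: fN.
  - by move=> a x [n fx]; exists n; case/idealP: (idf n) => _ _ _ fM; apply: fM.
have [s [sU Usub]] := noetherian_fg Rnoeth idU.
have [N sN] : exists N, forall x, x \in s -> f N x.
  elim: s {Usub} sU => [|x s IH] sU; first by exists 0%N.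
  have [n fx] := sU x (mem_head _ _).
  have [N sN] := IH (fun y sy => sU y (mem_behead (s := x :: s) sy)).
  exists (maxn n N) => y; rewrite in_cons => /predU1P [->|/sN].
    exact: mono (leq_maxl n N) _ fx.
  exact: mono (leq_maxr n N) _.
by exists N => x fx; apply: (Usub _ (idf N) sN); exists N.+1.
Qed.

Lemma noetherian_maximal (F : (R -> Prop) -> Prop) J0 : noetherian R ->
  (forall J, F J -> ideal J) -> F J0 ->
  exists J, F J /\ forall J', F J' -> incl J J' -> incl J' J.
Proof.
move=> Rnoeth idF FJ0; apply: NNPP => no_max.
have grow J : F J -> exists J', F J' /\ incl J J' /\ ~ incl J' J.
  move=> FJ; apply: NNPP => no_grow; apply: no_max; exists J; split=> // J' FJ' JJ'.
  by apply: NNPP => J'J; apply: no_grow; exists J'.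
pose next J := epsilon (inhabits J0) (fun J' => F J' /\ incl J J' /\ ~ incl J' J).
pose f := fix f n := if n is n'.+1 then next (f n') else J0.
have Ff n : F (f n).
  by elim: n => [|n IH] //=; exact: (epsilon_spec _ _ (grow _ IH)).1.
have f_grow n : incl (f n) (f n.+1) /\ ~ incl (f n.+1) (f n).
  exact: (epsilon_spec _ _ (grow _ (Ff n))).2.
have [N fN] := noetherian_ascending_chain Rnoeth (fun n => idF _ (Ff n))
  (fun n => (f_grow n).1).
exact: (f_grow N).2 fN.
Qed.

Definition ideal_adjoin (J : R -> Prop) (z y : R) := exists j r, J j /\ y = j + r * z.

Lemma ideal_adjoin_ideal J z : ideal J -> ideal (ideal_adjoin J z).
Proof.
case/idealP=> J0 JD JN JM; apply/idealP; split.
- by exists 0, 0; rewrite mul0r addr0.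
- move=> _ _ [j [r [Jj ->]]] [j' [r' [Jj' ->]]].
  by exists (j + j'), (r + r'); split; [apply: JD|ring].
- move=> _ [j [r [Jj ->]]]; exists (- j), (- r); split; [exact: JN|ring].
- move=> a _ [j [r [Jj ->]]]; exists (a * j), (a * r); split; [exact: JM|ring].
Qed.

Lemma maximal_disjoint_prime (S J : R -> Prop) :
  S 1 -> (forall x y, S x -> S y -> S (x * y)) ->
  ideal J -> (forall y, J y -> ~ S y) ->
  (forall J', ideal J' -> (forall y, J' y -> ~ S y) -> incl J J' -> incl J' J) ->
  is_prime (S := sring_of R) J.
Proof.
move=> S1 SM idJ JS Jmax; split=> //; split; first by move/JS.
have [J0 JD _ JM] := (idealP J).1 idJ.
have meet z : ~ J z -> exists s, S s /\ ideal_adjoin J z s.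
  move=> Jz; apply: NNPP => no_s; apply: Jz.
  apply: (Jmax _ (ideal_adjoin_ideal z idJ)).
  - by move=> s adj_s Ss; apply: no_s; exists s.
  - by move=> y Jy; exists y, 0; rewrite mul0r addr0.
  - by exists 0, 1; rewrite mul1r add0r.
move=> x y _ _ /= Jxy; apply: NNPP => /not_or_and [/meet [s [Ss [j [r [Jj def_s]]]]]].
move=> /meet [s' [Ss' [j' [r' [Jj' def_s']]]]].
apply: (JS _ _ (SM _ _ Ss Ss')); rewrite def_s def_s'.
have -> : (j + r * x) * (j' + r' * y) =
    (j' + r' * y) * j + r * x * j' + r * r' * (x * y) by ring.
by apply: (JD); [apply: (JD)|]; apply: (JM).
Qed.
End Ideals.

Section PrimeLocalization.
Variables (R : comNzRingType) (P : R -> Prop).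
Hypothesis P_prime : is_prime (S := sring_of R) P.

Lemma prime_ideal : ideal P.
Proof. by case: P_prime. Qed.

Lemma primeM x y : P (x * y) <-> P x \/ P y.
Proof.
have [[_ [_ [_ [_ [_ PM]]]]] [_ PMV]] := P_prime; split; first exact: PMV.
by case=> [Px|Py]; [rewrite mulrC|]; apply: PM.
Qed.

Lemma nprime1 : ~ P 1.
Proof. by case: P_prime => _ []. Qed.

Lemma nprimeM x y : ~ P x -> ~ P y -> ~ P (x * y).
Proof. by move=> nPx nPy /primeM []. Qed.

Lemma primeX x n : P (x ^+ n) -> P x.
Proof.
elim: n => [|n IH]; first by rewrite expr0 => /nprime1.
by rewrite exprS => /primeM [].
Qed.

Lemma nprimeX x n : ~ P x -> ~ P (x ^+ n).
Proof. by move=> nPx /primeX. Qed.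

Definition loc_ker (y : R) := exists t, ~ P t /\ t * y = 0.

Lemma loc_ker_ideal : ideal loc_ker.
Proof.
apply/idealP; split.
- by exists 1; split; [exact: nprime1|rewrite mulr0].
- move=> x y [t [nPt tx0]] [t' [nPt' t'y0]]; exists (t * t').
  split; first exact: nprimeM.
  by rewrite mulrDr mulrAC tx0 -mulrA t'y0 mul0r mulr0 addr0.
- by move=> x [t [nPt tx0]]; exists t; rewrite mulrN tx0 oppr0.
- by move=> a x [t [nPt tx0]]; exists t; rewrite mulrCA tx0 mulr0.
Qed.

Lemma loc_kerMl a y : loc_ker y -> loc_ker (a * y).
Proof. by case/idealP: loc_ker_ideal => _ _ _; apply. Qed.

Lemma loc_ker_prime y : loc_ker y -> P y.
Proof.
case=> t [nPt ty0]; have : P (t * y) by rewrite ty0; case/idealP: prime_ideal.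
by case/primeM.
Qed.

Lemma loc_ker_cancel t y : ~ P t -> loc_ker (t * y) -> loc_ker y.
Proof.
move=> nPt [t' [nPt' t'ty0]]; exists (t' * t).
by split; [exact: nprimeM|rewrite -mulrA].
Qed.

Section Noetherian.
Hypothesis R_noeth : noetherian R.

Lemma loc_ker_annihilator : exists b, ~ P b /\ forall y, loc_ker y -> b * y = 0.
Proof.
have [s [sI Isub]] := noetherian_fg R_noeth loc_ker_ideal.
have [b [nPb bs0]] : exists b, ~ P b /\ forall y, y \in s -> b * y = 0.
  elim: s {Isub} sI => [|x s IH] sI; first by exists 1; split=> //; apply: nprime1.
  have [t [nPt tx0]] := sI x (mem_head _ _).
  have [b [nPb bs0]] := IH (fun y sy => sI y (mem_behead (s := x :: s) sy)).
  exists (b * t); split=> [|y]; first exact: nprimeM.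
  rewrite in_cons => /predU1P [->|/bs0 by0]; first by rewrite -mulrA tx0 mulr0.
  by rewrite mulrAC by0 mul0r.
exists b; split=> //; apply: Isub bs0; apply/idealP; split.
- by rewrite mulr0.
- by move=> x y bx0 by0; rewrite mulrDr bx0 by0 addr0.
- by move=> x bx0; rewrite mulrN bx0 oppr0.
- by move=> a x bx0; rewrite mulrCA bx0 mulr0.
Qed.

Hypothesis P_minimal :
  forall Q, is_prime (S := sring_of R) Q -> incl Q P -> incl P Q.

(* [P R_P] is nilpotent: an ideal maximal among those avoiding the powers of
   [x] times units of [R_P] is a prime inside [P], hence equal to [P]. *)
Lemma minimal_prime_nilpotent x : P x -> exists n, loc_ker (x ^+ n).
Proof.
move=> Px; apply: NNPP => no_n.
pose S y := exists t n, ~ P t /\ y = t * x ^+ n.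
pose F J := ideal J /\ forall y, J y -> ~ S y.
have F0 : F (fun y => y = 0).
  split; last by move=> _ -> [t [n [nPt tx0]]]; apply: no_n; exists n, t.
  by apply/idealP; split=> [|x1 x2 -> ->|x1 ->|a x1 ->]; rewrite ?addr0 ?oppr0 ?mulr0.
have [J [[idJ JS] Jmax]] := noetherian_maximal R_noeth (fun J (FJ : F J) => FJ.1) F0.
have J_prime : is_prime (S := sring_of R) J.
  apply: (maximal_disjoint_prime (S := S)) => //.
  - by exists 1, 0%N; split; [exact: nprime1|rewrite expr0 mulr1].
  - move=> _ _ [t [m [nPt ->]]] [t' [n [nPt' ->]]]; exists (t * t'), (m + n)%N.
    by split; [exact: nprimeM|rewrite exprD; ring].
  - by move=> J' idJ' J'S; apply: Jmax.
have JP : incl J P.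
  move=> y Jy; apply: NNPP => nPy; apply: (JS y Jy).
  by exists y, 0%N; split; rewrite // expr0 mulr1.
apply: (JS x (P_minimal J_prime JP Px)).
by exists 1, 1%N; split; [exact: nprime1|rewrite expr1 mul1r].
Qed.

Lemma last_false_before (Q : nat -> Prop) n :
  ~ Q 0%N -> Q n -> exists e, ~ Q e /\ Q e.+1.
Proof.
elim: n => [|n IH] nQ0 Qn; first by [].
by case: (classic (Q n)) => [/IH|nQn]; [apply|exists n].
Qed.

Lemma minimal_prime_associated :
  exists z, ~ loc_ker z /\ forall x, loc_ker (x * z) <-> P x.
Proof.
have [s [sP Psub]] := noetherian_fg R_noeth prime_ideal.
have [z [nIz Isz]] : exists z, ~ loc_ker z /\ forall x, x \in s -> loc_ker (x * z).
  elim: s {Psub} sP => [|x s IH] sP.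
    by exists 1; split=> //; move/loc_ker_prime; apply: nprime1.
  have [n Ixn] := minimal_prime_nilpotent (sP x (mem_head _ _)).
  have [z [nIz Isz]] := IH (fun y sy => sP y (mem_behead (s := x :: s) sy)).
  have [e [nIe Ie]] : exists e, ~ loc_ker (x ^+ e * z) /\ loc_ker (x ^+ e.+1 * z).
    apply: (last_false_before (n := n)); first by rewrite expr0 mul1r.
    by rewrite mulrC; apply: loc_kerMl.
  exists (x ^+ e * z); split=> // y; rewrite in_cons => /predU1P [->|/Isz Iyz].
    by rewrite mulrA -exprS.
  by rewrite mulrCA; apply: loc_kerMl.
have colon_ideal : ideal (fun x => loc_ker (x * z)).
  case/idealP: loc_ker_ideal => I0 ID IN IM; apply/idealP; split.
  - by rewrite mul0r.
  - by move=> x1 x2 I1 I2; rewrite mulrDl; apply: ID.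
  - by move=> x1 I1; rewrite mulNr; apply: IN.
  - by move=> a x1 I1; rewrite -mulrA; apply: IM.
exists z; split=> // x; split; last exact: Psub colon_ideal Isz x.
by move=> Ixz; apply: NNPP => nPx; apply/nIz/(loc_ker_cancel nPx).
Qed.
End Noetherian.
End PrimeLocalization.

Section Rprime.
Variables (R : comNzRingType) (b : R) (as_ : seq R).

(* [J(b)]; [beqv b p q] unfolds to [btorsion b (p.1 * b ^+ q.2 - q.1 * b ^+ p.2)]. *)
Definition btorsion (y : R) := exists k, b ^+ k * y = 0.

Lemma btorsion_lin u v a c : btorsion u -> btorsion v -> btorsion (a * u + c * v).
Proof.
move=> [k bu0] [l bv0]; exists (k + l)%N.
have -> : b ^+ (k + l) * (a * u + c * v) =
    a * b ^+ l * (b ^+ k * u) + c * b ^+ k * (b ^+ l * v) by rewrite exprD; ring.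
by rewrite bu0 bv0 !mulr0 addr0.
Qed.

Lemma inR'_R x : inR' b as_ (x, 0%N).
Proof. by exists (x, 0%N); split; [constructor|exists 0%N; rewrite subrr mulr0]. Qed.

Lemma inR'_add p q : inR' b as_ p -> inR' b as_ q -> inR' b as_ (badd b p q).
Proof.
case: p q => [p1 p2] [q1 q2] [[p1' p2'] [gp ep]] [[q1' q2'] [gq eq]].
exists (badd b (p1', p2') (q1', q2')); split; first exact: Rgen_add.
have := btorsion_lin (b ^+ q2' * b ^+ q2) (b ^+ p2' * b ^+ p2) ep eq.
by congr btorsion; rewrite /= !exprD; ring.
Qed.

Lemma inR'_opp p : inR' b as_ p -> inR' b as_ (bopp p).
Proof.
case: p => [p1 p2] [[p1' p2'] [gp ep]].
exists (bopp (p1', p2')); split; first exact: Rgen_opp.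
have := btorsion_lin (-1) 0 ep ep.
by congr btorsion; rewrite /=; ring.
Qed.

Lemma inR'_mul p q : inR' b as_ p -> inR' b as_ q -> inR' b as_ (bmul p q).
Proof.
case: p q => [p1 p2] [q1 q2] [[p1' p2'] [gp ep]] [[q1' q2'] [gq eq]].
exists (bmul (p1', p2') (q1', q2')); split; first exact: Rgen_mul.
have := btorsion_lin (q1' * b ^+ q2) (p1 * b ^+ p2') ep eq.
by congr btorsion; rewrite /= !exprD; ring.
Qed.
End Rprime.

Lemma ordered_group_nonposD (G : porderZmodType) (u v : G) :
  ordered_abelian_group G -> ~~ (0 < u) -> ~~ (0 < v) -> ~~ (0 < u + v).
Proof.
case=> total addr_le.
have le0 (w : G) : ~~ (0 < w) -> w <= 0.
  by case/orP: (total w 0) => // w_ge0; rewrite lt_def w_ge0 andbT negbK => /eqP <-.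
move=> /le0 u_le0 /le0 v_le0.
have uv_le0 : u + v <= 0 by apply: le_trans (addr_le _ _ v u_le0) _; rewrite add0r.
by apply/negP => /lt_le_trans /(_ uv_le0); rewrite ltxx.
Qed.

Section Blowup.
Variables (R : comNzRingType) (G : porderZmodType) (nu : R -> option G).
Hypotheses (G_ordered : ordered_abelian_group G) (nu_val : is_valuation nu).
Variables (b : R) (as_ : seq R).
Hypothesis nu_b : nu b <> None.

Definition vsupp (r : R) := nu r = None.

Lemma vsupp_minimal_prime : is_minimal_prime (S := sring_of R) vsupp.
Proof. by case: nu_val => _ [_ [_ [_]]]. Qed.

Lemma vsupp_prime : is_prime (S := sring_of R) vsupp.
Proof. by case: vsupp_minimal_prime. Qed.

Lemma offC_vsupp h : R'offC nu b as_ h -> ~ vsupp h.1.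
Proof.
case=> _; rewrite /nub /vsupp => nub_le0 nu_h.
by rewrite nu_h in nub_le0; case: (nu b) nub_le0.
Qed.

Lemma offC_one : R'offC nu b as_ (bone R).
Proof.
split; first exact: inR'_R.
case: nu_val => _ [_ [nu1 _]]; rewrite /nub /= nu1.
by case: (nu b) nu_b => // vb _ /=; rewrite mulr0n subr0 ltxx.
Qed.

Lemma offC_mul p q :
  R'offC nu b as_ p -> R'offC nu b as_ q -> R'offC nu b as_ (bmul p q).
Proof.
case=> Rp nub_p [Rq nub_q]; split; first exact: inR'_mul.
case: nu_val nub_p nub_q => nuM _; rewrite /nub /= nuM.
case: (nu b) nu_b => // vb _.
case: (nu p.1) => [vp|] //; case: (nu q.1) => [vq|] //= p_le0 q_le0.
by rewrite mulrnDr opprD addrACA; apply: ordered_group_nonposD.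
Qed.
End Blowup.

Section BlowupRing.
Variables (R : comNzRingType) (G : porderZmodType) (nu : R -> option G).
Hypotheses (G_ordered : ordered_abelian_group G) (nu_val : is_valuation nu).
Variables (b : R) (as_ : seq R).
Hypothesis nu_b : nu b <> None.
Hypothesis R_noeth : noetherian R.
Hypothesis b_kills_loc_ker : forall y, loc_ker (vsupp nu) y -> b * y = 0.

Local Notation P := (vsupp nu).
Local Notation I := (loc_ker (vsupp nu)).
Local Notation B := (blowup nu b as_).

Let P_prime := vsupp_prime nu_val.

Lemma btorsion_loc_ker y : btorsion b y <-> I y.
Proof.
split=> [[k bky0]|/b_kills_loc_ker by0]; last by exists 1%N; rewrite expr1.
by exists (b ^+ k); split=> //; apply: nprimeX.
Qed.

(* [((a, i), (c, j))] stands for [(a / b^i) / (c / b^j)] = [num / den]. *)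
Definition num (x : scar B) : R := x.1.1 * b ^+ x.2.2.
Definition den (x : scar B) : R := x.2.1 * b ^+ x.1.2.

Lemma den_vsupp x : Defs.sval x -> ~ P (den x).
Proof.
by case=> _ /offC_vsupp nPx2; apply: (nprimeM P_prime nPx2); apply: nprimeX.
Qed.

Lemma num_vsupp x : P (num x) <-> P x.1.1.
Proof.
split=> [/(primeM P_prime) [//|/(primeX P_prime)]|Px]; first by [].
by apply/(primeM P_prime); left.
Qed.

Lemma blowup_seqvE x y : seqv x y <-> I (num x * den y - num y * den x).
Proof.
case: x y => [[a i] [c j]] [[a' i'] [c' j']]; rewrite /num /den /=; split.
  case=> h [/offC_vsupp nPh /btorsion_loc_ker]; rewrite /= expr0 mulr1 mul0r subr0.
  move=> /(loc_ker_cancel P_prime nPh); congr loc_ker; rewrite !exprD; ring.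
move=> I_xy; exists (bone R); split; first exact: offC_one.
apply/btorsion_loc_ker; move: I_xy; congr loc_ker; rewrite /= !exprD; ring.
Qed.

Lemma blowup_seqv0E x : seqv x (szero B) <-> I (num x).
Proof. by rewrite blowup_seqvE /num /den /=; split; congr loc_ker; ring. Qed.

Lemma sval_mul x y : Defs.sval x -> Defs.sval y -> Defs.sval (smul x y : scar B).
Proof.
by case=> Rx1 offC_x2 [Ry1 offC_y2]; split; [exact: inR'_mul|exact: offC_mul].
Qed.

Lemma sval_add x y : Defs.sval x -> Defs.sval y -> Defs.sval (sadd x y : scar B).
Proof.
case=> Rx1 offC_x2 [Ry1 offC_y2]; split; last exact: offC_mul.
by apply: inR'_add; apply: inR'_mul => //; [case: offC_y2|case: offC_x2].
Qed.

Lemma sval_opp x : Defs.sval x -> Defs.sval (sopp x : scar B).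
Proof. by case=> Rx1 offC_x2; split=> //; apply: inR'_opp. Qed.

Lemma sval_R (r : R) : Defs.sval (((r, 0%N), bone R) : scar B).
Proof. by split; [exact: inR'_R|exact: offC_one]. Qed.

Lemma sval_spow (x : scar B) n : Defs.sval x -> Defs.sval (spow x n).
Proof.
by move=> sx; elim: n => [|n IH]; [exact: sval_R|exact: sval_mul].
Qed.

Lemma num_spow (x : scar B) n : num (spow x n) = num x ^+ n.
Proof.
elim: n => [|n IH]; first by rewrite /num /= mulr1.
by rewrite /= exprS -IH /num /= exprD; ring.
Qed.

Lemma blowup_nilradicalE (x : scar B) : nilradical x <-> Defs.sval x /\ P x.1.1.
Proof.
split=> [[sx [n /blowup_seqv0E]]|[sx /num_vsupp Px]].
  by rewrite num_spow => /(loc_ker_prime P_prime) /(primeX P_prime) /num_vsupp.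
split=> //; have [n Ixn] := minimal_prime_nilpotent P_prime R_noeth
  (vsupp_minimal_prime nu_val).2 Px.
by exists n; apply/blowup_seqv0E; rewrite num_spow.
Qed.

Lemma blowup_nilradical_prime : is_prime (@nilradical B).
Proof.
have [P0 PD PN PM] := (idealP _).1 (prime_ideal P_prime).
have nilE := blowup_nilradicalE.
split; [split; [|split; [|split; [|split; [|split]]]]|split].
- by move=> x /nilE [].
- move=> x y sy /blowup_seqvE /(loc_ker_prime P_prime) P_xy /nilE [sx Px].
  apply/nilE; split=> //; have /(primeM P_prime) [/num_vsupp //|/den_vsupp []//] :
      P (num y * den x).
  have -> : num y * den x = num x * den y - (num x * den y - num y * den x) by ring.
  by apply: PD; [rewrite mulrC; apply/PM/num_vsupp|apply: PN].
- by apply/nilE; split; [exact: sval_R|exact: P0].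
- move=> x y /nilE [sx Px] /nilE [sy Py]; apply/nilE; split; first exact: sval_add.
  by apply: (PD); do 2!(apply/(primeM P_prime); left).
- by move=> x /nilE [sx Px]; apply/nilE; split; [exact: sval_opp|exact: PN].
- move=> a x sa /nilE [sx Px]; apply/nilE; split; first exact: sval_mul.
  by apply: PM.
- by move=> /nilE [_]; apply: nprime1.
- move=> x y sx sy /nilE [_ /(primeM P_prime) [Px|Py]]; [left|right]; exact/nilE.
Qed.

Lemma blowup_nilradical_ann : exists z : scar B, Defs.sval z /\
  forall x, nilradical x <-> Defs.sval x /\ seqv (smul x z) (szero B).
Proof.
have [z0 [_ Iz0]] := minimal_prime_associated P_prime R_noeth
  (vsupp_minimal_prime nu_val).2.
exists ((z0, 0%N), bone R); split=> [|x]; first exact: sval_R.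
have num_xz : num (smul x ((z0, 0%N), bone R)) = num x * z0.
  by rewrite /num /bone /= addn0; ring.
by rewrite blowup_nilradicalE blowup_seqv0E num_xz Iz0 num_vsupp.
Qed.

Lemma prime_blowup_nilradical (Q : scar B -> Prop) x :
  is_prime Q -> nilradical x -> Q x.
Proof.
case=> [[_ [Q_seqv [Q0 _]]] [nQ1 Q_prime]] [sx [n xn0]].
have Qxn : Q (spow x n).
  apply: (Q_seqv (szero B)) Q0; first exact: sval_spow.
  apply/blowup_seqvE; move/blowup_seqv0E/(loc_kerMl P_prime (-1)): xn0.
  by congr loc_ker; rewrite /num /den /=; ring.
elim: n Qxn {xn0} => [/nQ1 //|n IH /(Q_prime _ _ sx (sval_spow n sx)) [] //].
Qed.

Lemma blowup_associated_primes (Q : scar B -> Prop) :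
  is_associated_prime Q <-> forall x, Q x <-> nilradical x.
Proof.
split=> [[Q_prime [z [sz Qz]]] x|QE].
  have nIz : ~ I (num z).
    case: Q_prime => _ [nQ1 _] Iz; apply/nQ1/Qz; split; first exact: sval_R.
    by apply/blowup_seqv0E; move: Iz; congr loc_ker; rewrite /num /=; ring.
  split=> [/Qz [sx /blowup_seqv0E Ixz]|]; last exact: prime_blowup_nilradical.
  apply/blowup_nilradicalE; split=> //; apply/num_vsupp; apply: NNPP => nPx.
  apply/nIz/(loc_ker_cancel P_prime nPx); move: Ixz.
  by congr loc_ker; rewrite /num /= exprD; ring.
have -> : Q = @nilradical B.
  by apply: functional_extensionality => x; apply: propositional_extensionality.
by split; [exact: blowup_nilradical_prime|exact: blowup_nilradical_ann].
Qed.
End BlowupRing.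

Unset Implicit Arguments.

Theorem mainTheorem7 (R : comNzRingType) (m : R -> Prop)
    (G : porderZmodType) (nu : R -> option G) :
  ordered_abelian_group G ->
  noetherian R -> local_ring m ->
  is_valuation nu -> centered_on nu m ->
  exists (b : R) (as_ : seq R),
    nu b <> None /\
    (forall a, a \in as_ -> ole (nu b) (nu a)) /\
    (forall P : scar (blowup nu b as_) -> Prop,
       is_associated_prime P <->
       (forall x, P x <-> nilradical x)).
Proof.
(* Blowing up along [b] alone suffices. *)
move=> G_ordered R_noeth _ nu_val _.
have [b [nu_b b_kills]] := loc_ker_annihilator (vsupp_prime nu_val) R_noeth.
exists b, [::]; do 2!split=> //.
exact: blowup_associated_primes.
Qed.
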